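(* Let $(J,[\cdot,\cdot],\alpha,B)$ be a finite-dimensional multiplicative metric Hom-Jacobi-Jordan algebra. Then (1) the center $\mathfrak Z(J)$ is an ideal of $J$; (2) $\mathfrak Z(J)=[J,J]^{\perp}$, and consequently $\dim\mathfrak Z(J)+\dim[J,J]=\dim J$.
   Context: A Hom-Jacobi-Jordan algebra is $(J,[\cdot,\cdot],\alpha)$ with $[\cdot,\cdot]$ symmetric bilinear, $\alpha$ linear and $[\alpha(x),[y,z]]+[\alpha(y),[z,x]]+[\alpha(z),[x,y]]=0$ for all $x,y,z$; it is multiplicative if $\alpha([x,y])=[\alpha(x),\alpha(y)]$. A metric Hom-Jacobi-Jordan algebra is $(J,[\cdot,\cdot],\alpha,B)$ with $B$ a nondegenerate symmetric bilinear form such that $B(x,[y,z])=B([x,y],z)$ and $B(\alpha(x),y)=B(x,\alpha(y))$ for all $x,y,z$. An ideal is a subspace $I$ with $[I,J]\subset I$ and $\alpha(I)\subset I$. The center is $\mathfrak Z(J)=\{x\in J: [x,y]=0\ \forall y\in J\}$; $[J,J]$ is the span of all $[x,y]$; for a subspace $W$, $W^\perp=\{x: B(x,w)=0\ \forall w\in W\}$. *)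

From HB Require Import structures.
From mathcomp Require Import all_boot all_order all_algebra.
Set Implicit Arguments. Unset Strict Implicit. Unset Printing Implicit Defensive.
Import GRing.Theory.
Local Open Scope ring_scope.

Section HomJJ.
Variables (K : fieldType) (V : vectType K).

Definition bilinear_map (br : V -> V -> V) : Prop :=
  (forall (a : K) (x y z : V), br (a *: x + y) z = a *: br x z + br y z) /\
  (forall (a : K) (x y z : V), br x (a *: y + z) = a *: br x y + br x z).

Definition linear_map (f : V -> V) : Prop :=
  forall (a : K) (x y : V), f (a *: x + y) = a *: f x + f y.

Definition bilinear_form (B : V -> V -> K) : Prop :=
  (forall (a : K) (x y z : V), B (a *: x + y) z = a * B x z + B y z) /\
  (forall (a : K) (x y z : V), B x (a *: y + z) = a * B x y + B x z).

Definition hom_jacobi_jordan (br : V -> V -> V) (alpha : V -> V) : Prop :=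
  [/\ bilinear_map br, linear_map alpha,
      (forall x y, br x y = br y x) &
      (forall x y z, br (alpha x) (br y z) + br (alpha y) (br z x)
                     + br (alpha z) (br x y) = 0)].

Definition hom_multiplicative (br : V -> V -> V) (alpha : V -> V) : Prop :=
  forall x y, alpha (br x y) = br (alpha x) (alpha y).

Definition metric_hom_jacobi_jordan (br : V -> V -> V) (alpha : V -> V)
    (B : V -> V -> K) : Prop :=
  [/\ hom_jacobi_jordan br alpha,
      bilinear_form B /\ (forall x y, B x y = B y x),
      (forall x, (forall y, B x y = 0) -> x = 0),
      (forall x y z, B x (br y z) = B (br x y) z) &
      (forall x y, B (alpha x) y = B x (alpha y))].

Definition is_ideal (br : V -> V -> V) (alpha : V -> V) (I : {vspace V}) : Prop :=
  (forall x y, x \in I -> br x y \in I) /\ (forall x, x \in I -> alpha x \in I).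

Definition central (br : V -> V -> V) (x : V) : Prop := forall y, br x y = 0.

Definition is_center (br : V -> V -> V) (Z : {vspace V}) : Prop :=
  forall x, x \in Z <-> central br x.

Definition is_derived (br : V -> V -> V) (D : {vspace V}) : Prop :=
  (forall x y, br x y \in D) /\
  (forall U : {vspace V}, (forall x y, br x y \in U) -> (D <= U)%VS).

Definition in_perp (B : V -> V -> K) (W : {vspace V}) (x : V) : Prop :=
  forall w, w \in W -> B x w = 0.

End HomJJ.

From HB Require Import structures.
From mathcomp Require Import all_boot all_order all_algebra.
Set Implicit Arguments. Unset Strict Implicit. Unset Printing Implicit Defensive.
Import GRing.Theory VectorInternalTheory.
Local Open Scope ring_scope.

(* Invariance B([x, y], z) = B(x, [y, z]) and nondegeneracy make x central
   iff x is orthogonal to every bracket, i.e. to [J, J]; so Z(J) = [J, J]^perp,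
   and the dimension formula is dim W^perp + dim W = dim J, which holds for a
   nondegenerate form because W^perp is the kernel of G M_W^T with G the
   (invertible) Gram matrix and M_W a matrix whose rows span W.  If x is
   central, B([alpha x, y], z) = B(x, alpha [y, z]) = B([x, alpha y], alpha z)
   = 0, so alpha x is central too. *)

Section FormMatrix.
Variables (K : fieldType) (V : vectType K) (B : V -> V -> K).
Hypothesis B_bilinear : bilinear_form B.

Lemma form0l y : B 0 y = 0.
Proof.
have := (proj1 B_bilinear) 1 0 0 y.
by rewrite scale1r addr0 mul1r -{1}[B 0 y]addr0 => /addrI <-.
Qed.

Lemma form0r x : B x 0 = 0.
Proof.
have := (proj2 B_bilinear) 1 x 0 0.
by rewrite scale1r addr0 mul1r -{1}[B x 0]addr0 => /addrI <-.
Qed.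

Lemma form_sumZl I (r : seq I) (a : I -> K) (u : I -> V) y :
  B (\sum_(i <- r) a i *: u i) y = \sum_(i <- r) a i * B (u i) y.
Proof.
by elim/big_rec2: _ => [|i s t _ IH]; rewrite ?form0l // (proj1 B_bilinear) IH.
Qed.

Lemma form_sumZr I (r : seq I) (a : I -> K) (u : I -> V) x :
  B x (\sum_(i <- r) a i *: u i) = \sum_(i <- r) a i * B x (u i).
Proof.
by elim/big_rec2: _ => [|i s t _ IH]; rewrite ?form0r // (proj2 B_bilinear) IH.
Qed.

Let e (i : 'I_(dim V)) : V := r2v (delta_mx 0 i).

Definition gram : 'M[K]_(dim V) := \matrix_(i, j) B (e i) (e j).

Lemma vec_sum_delta z : z = \sum_i v2r z 0 i *: e i.
Proof.
rewrite -{1}[z]v2rK {1}(row_sum_delta (v2r z)) linear_sum.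
by apply: eq_bigr => i _; rewrite linearZ.
Qed.

Lemma form_gram x y : B x y = (v2r x *m gram *m (v2r y)^T) 0 0.
Proof.
rewrite {1}(vec_sum_delta x) {1}(vec_sum_delta y) form_sumZl mxE.
under eq_bigr do rewrite form_sumZr big_distrr.
rewrite exchange_big; apply: eq_bigr => j _.
rewrite !mxE big_distrl; apply: eq_bigr => i _.
by rewrite !mxE /= mulrA mulrAC.
Qed.

Lemma memv_v2r (U : {vspace V}) x : (x \in U) = (v2r x <= vs2mx U)%MS.
Proof. by rewrite -genmxE. Qed.

Definition orthv (D : {vspace V}) : {vspace V} :=
  mx2vs (kermx (gram *m (vs2mx D)^T)).

Lemma orthvP D x : x \in orthv D <-> in_perp B D x.
Proof.
rewrite memv_v2r mx2vsK sub_kermx mulmxA; split=> [/eqP x_perp w | x_perp].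
  rewrite memv_v2r form_gram => /submxP[r ->].
  by rewrite trmx_mul mulmxA x_perp mul0mx mxE.
apply/eqP/rowP => j; rewrite [RHS]mxE -(x_perp (r2v (row j (vs2mx D)))).
  by rewrite form_gram r2vK !mxE; apply: eq_bigr => k _; rewrite !mxE.
by rewrite memv_v2r r2vK row_sub.
Qed.

Hypothesis B_nondegenerate : forall x, (forall y, B x y = 0) -> x = 0.

Lemma gram_row_free : row_free gram.
Proof.
rewrite -kermx_eq0; apply/eqP/row_matrixP => i; rewrite row0.
have /sub_kermxP kerG := row_sub i (kermx gram).
have : r2v (row i (kermx gram)) = 0.
  by apply: B_nondegenerate => y; rewrite form_gram r2vK kerG !mul0mx mxE.
by move/(congr1 v2r); rewrite r2vK linear0.
Qed.

Lemma dim_orthv D : (\dim (orthv D) + \dim D)%N = \dim {:V}.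
Proof.
rewrite /dimv mx2vsK mxrank_ker -mxrank_tr trmx_mul trmxK mxrankMfree.
  by rewrite subnK ?rank_leq_col // -/(dimv _) dimvf.
by rewrite /row_free mxrank_tr; exact: gram_row_free.
Qed.

End FormMatrix.

Section MetricCenter.
Variables (K : fieldType) (V : vectType K).
Variables (br : V -> V -> V) (alpha : V -> V) (B : V -> V -> K).
Hypotheses (B_bilinear : bilinear_form B) (B_sym : forall x y, B x y = B y x).
Hypothesis B_nondegenerate : forall x, (forall y, B x y = 0) -> x = 0.
Hypothesis B_invariant : forall x y z, B x (br y z) = B (br x y) z.
Hypothesis alpha_selfadjoint : forall x y, B (alpha x) y = B x (alpha y).
Hypothesis alpha_multiplicative : hom_multiplicative br alpha.

Lemma central_alpha x : central br x -> central br (alpha x).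
Proof.
move=> x_central y; apply: B_nondegenerate => z.
rewrite -B_invariant alpha_selfadjoint alpha_multiplicative B_invariant.
by rewrite x_central form0l.
Qed.

Lemma center_ideal Z : is_center br Z -> is_ideal br alpha Z.
Proof.
move=> Z_center; split=> [x y /Z_center x_central | x /Z_center x_central].
  by rewrite x_central mem0v.
by apply/Z_center/central_alpha.
Qed.

Lemma center_eq_orthv Z D : is_center br Z -> is_derived br D -> Z = orthv B D.
Proof.
move=> Z_center [br_in_D D_min].
have D_orth_Z : (D <= orthv B Z)%VS.
  apply: D_min => y z; apply/(orthvP B_bilinear) => u /Z_center u_central.
  by rewrite B_sym B_invariant u_central form0l.
apply/vspaceP => x.
apply/idP/idP => [/Z_center x_central | /(orthvP B_bilinear) x_perp].
  apply/(orthvP B_bilinear) => w /(subvP D_orth_Z)/(orthvP B_bilinear) w_perp.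
  by rewrite B_sym w_perp //; apply/Z_center.
apply/Z_center => y; apply: B_nondegenerate => z.
by rewrite -B_invariant x_perp.
Qed.

End MetricCenter.

Theorem proposition6p3 (K : fieldType) (V : vectType K)
    (br : V -> V -> V) (alpha : V -> V) (B : V -> V -> K) :
  metric_hom_jacobi_jordan br alpha B ->
  hom_multiplicative br alpha ->
  (forall Z : {vspace V}, is_center br Z -> is_ideal br alpha Z) /\
  (forall Z D : {vspace V}, is_center br Z -> is_derived br D ->
     (forall x, x \in Z <-> in_perp B D x) /\
     (\dim Z + \dim D = \dim (fullv : {vspace V}))%N).
Proof.
move=> [_ [B_bilinear B_sym] B_nondeg B_inv alpha_selfadj] alpha_mult.
split=> [Z | Z D Z_center D_derived].
  exact: (center_ideal B_bilinear B_nondeg B_inv alpha_selfadj alpha_mult).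
rewrite (center_eq_orthv B_bilinear B_sym B_nondeg B_inv Z_center D_derived).
by split=> [x|]; [exact: orthvP | exact: dim_orthv].
Qed.
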